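(* Suppose that $X$ is a finite-dimensional real Hilbert space and that $U,V$ are linear subspaces of $X$. Then \[ P_{U+V}=\mathrm{Id}-2P_{U^\perp}(P_{U^\perp}+P_{V^\perp})^\dagger P_{V^\perp}=\mathrm{Id}-2(\mathrm{Id}-P_U)\big(2\mathrm{Id}-P_U-P_V\big)^\dagger(\mathrm{Id}-P_V). \]
   Context: $P_S$ denotes the orthogonal projection onto $S$, and $A^\dagger$ denotes the Moore-Penrose inverse of the linear map $A$. *)

(* X = R^n with the standard inner product <x,y> = x *m y^T,
   vectors are row vectors 'rV[R]_n, linear maps are matrices acting on the
   right (x |-> x *m A), subspaces are row spaces of square matrices (mxalgebra). *)
From HB Require Import structures.
From mathcomp Require Import all_boot all_order all_algebra.
From mathcomp Require Import reals.
Set Implicit Arguments. Unset Strict Implicit. Unset Printing Implicit Defensive.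
Import Order.TTheory GRing.Theory Num.Theory.
Local Open Scope ring_scope.

Definition orthc (R : realType) (n : nat) (S : 'M[R]_n) : 'M[R]_n := kermx S^T.

Definition is_orth_proj (R : realType) (n : nat) (S P : 'M[R]_n) : Prop :=
  forall x : 'rV[R]_n, (x *m P <= S)%MS /\ (x - x *m P) *m S^T = 0.

Definition is_MP_inverse (R : realType) (n : nat) (A M : 'M[R]_n) : Prop :=
  [/\ A *m M *m A = A, M *m A *m M = M, (A *m M)^T = A *m M & (M *m A)^T = M *m A].

From HB Require Import structures.
From mathcomp Require Import all_boot all_order all_algebra.
From mathcomp Require Import reals.
Set Implicit Arguments. Unset Strict Implicit. Unset Printing Implicit Defensive.
Import Order.TTheory GRing.Theory Num.Theory.
Local Open Scope ring_scope.

(* Let A, B be the orthogonal projections onto U^perp, V^perp and M the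
   Moore-Penrose inverse of A + B.  As A + B is positive semidefinite, its
   kernel is ker A /\ ker B, so (A + B) M fixes the ranges of A and B; hence
   B M A = A M B = A - A M A = B - B M B.  These identities make 2 B M A the
   orthogonal projection onto U^perp /\ V^perp = (U + V)^perp (the parallel sum
   of Anderson and Duffin), which is Id - P_(U+V).  The second formula is the
   first one, because P_(U^perp) = Id - P_U.  Maps act on row vectors from the
   right, so the paper's P_(U^perp) (...)^+ P_(V^perp) is written B M A. *)

Section Gram.
Variables (R : realDomainType) (m p : nat).
Implicit Types C D : 'M[R]_(m, p).

Lemma mxtrace_mulmx_tr C : \tr (C *m C^T) = \sum_i \sum_j C i j ^+ 2.
Proof.
by apply: eq_bigr => i _; rewrite !mxE; apply: eq_bigr => j _; rewrite mxE expr2.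
Qed.

Lemma mxtrace_mulmx_tr_ge0 C : 0 <= \tr (C *m C^T).
Proof.
by rewrite mxtrace_mulmx_tr; do 2![apply: sumr_ge0 => ? _]; apply: sqr_ge0.
Qed.

Lemma mxtrace_mulmx_tr_eq0 C : (\tr (C *m C^T) == 0) = (C == 0).
Proof.
apply/eqP/eqP => [|->]; last by rewrite mul0mx mxtrace0.
rewrite mxtrace_mulmx_tr => trC0; apply/matrixP => i j; rewrite mxE.
have rowC0 := psumr_eq0P (fun i _ => sumr_ge0 _ (fun j _ => sqr_ge0 (C i j))) trC0.
have /eqP := psumr_eq0P (fun j _ => sqr_ge0 (C i j)) (rowC0 i isT) (i := j) isT.
by rewrite sqrf_eq0 => /eqP.
Qed.

Lemma addmx_mulmx_tr_eq0 C D : C *m C^T + D *m D^T = 0 -> C = 0 /\ D = 0.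
Proof.
move/(congr1 mxtrace); rewrite mxtraceD mxtrace0 => /eqP.
rewrite paddr_eq0 ?mxtrace_mulmx_tr_ge0 // !mxtrace_mulmx_tr_eq0.
by case/andP => /eqP -> /eqP ->.
Qed.

Lemma mulmx_tr_eq0 C : C *m C^T = 0 -> C = 0.
Proof. by move=> CC0; apply/eqP; rewrite -mxtrace_mulmx_tr_eq0 CC0 mxtrace0. Qed.

End Gram.

Section OrthogonalProjection.
Variables (R : realType) (n : nat).
Implicit Types S T P Q U V : 'M[R]_n.

Lemma sub_mulmx_tr_eq0 q r (S : 'M[R]_(q, n)) (Y : 'M[R]_(r, n)) :
  (Y <= S)%MS -> Y *m S^T = 0 -> Y = 0.
Proof.
case/submxP=> D -> YS0; apply: mulmx_tr_eq0.
by rewrite trmx_mul mulmxA YS0 mul0mx.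
Qed.

Lemma orth_projP S P : is_orth_proj S P <-> (P <= S)%MS /\ P *m S^T = S^T.
Proof.
split=> [projP | [PS PST] x]; last first.
  by rewrite (submx_trans (submxMl x P) PS) mulmxBl -mulmxA PST subrr.
split; first by apply/row_subP => i; rewrite -[P]mul1mx row_mul; case: (projP (row i 1%:M)).
apply/row_matrixP => i; have [_] := projP (row i 1%:M).
by rewrite mulmxBl -mulmxA -!row_mul !mul1mx => /eqP; rewrite subr_eq0 => /eqP.
Qed.

Section Basics.
Variables (S P : 'M[R]_n).
Hypothesis projP : is_orth_proj S P.

Lemma orth_proj_sub : (P <= S)%MS.
Proof. by case/orth_projP: projP. Qed.

Lemma orth_proj_mul_tr : P *m S^T = S^T.
Proof. by case/orth_projP: projP. Qed.

Lemma orth_proj_id r (W : 'M[R]_(r, n)) : (W <= S)%MS -> W *m P = W.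
Proof.
move=> WS; apply/eqP; rewrite -subr_eq0; apply/eqP; apply: (@sub_mulmx_tr_eq0 _ _ S).
  by rewrite addmx_sub ?eqmx_opp ?(submx_trans (submxMl W P)) ?orth_proj_sub.
by rewrite mulmxBl -mulmxA orth_proj_mul_tr subrr.
Qed.

Lemma orth_proj_idem : P *m P = P.
Proof. exact/orth_proj_id/orth_proj_sub. Qed.

Lemma orth_proj_tr : P^T = P.
Proof.
have PPt : P *m P^T = P.
  have /submxP[D DS] := orth_proj_sub.
  by rewrite {1}DS -mulmxA -[S *m _]trmxK trmx_mul !trmxK orth_proj_mul_tr trmxK -DS.
by rewrite -{1}PPt trmx_mul trmxK PPt.
Qed.

Lemma orth_proj_orthc : is_orth_proj (orthc S) (1%:M - P).
Proof.
apply/orth_projP; split; first by apply/sub_kermxP; rewrite mulmxBl mul1mx orth_proj_mul_tr subrr.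
have /submxP[D ->] := orth_proj_sub.
have SK : S *m (orthc S)^T = 0.
  by apply: trmx_inj; rewrite trmx_mul trmxK trmx0; apply: mulmx_ker.
by rewrite mulmxBl mul1mx -mulmxA SK mulmx0 subr0.
Qed.

Lemma orth_proj_eqmx T : (S :=: T)%MS -> is_orth_proj T P.
Proof.
move=> eqST; apply/orth_projP; rewrite -eqST orth_proj_sub; split=> //.
have /submxP[E ->] : (T <= S)%MS by rewrite eqST.
by rewrite trmx_mul mulmxA orth_proj_mul_tr.
Qed.

End Basics.

Lemma orth_proj_uniq S P Q : is_orth_proj S P -> is_orth_proj S Q -> P = Q.
Proof.
move=> projP projQ.
have PQ : P *m Q = P by apply: (orth_proj_id projQ); apply: orth_proj_sub projP.
have QP : Q *m P = Q by apply: (orth_proj_id projP); apply: orth_proj_sub projQ.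
by rewrite -(orth_proj_tr projP) -PQ trmx_mul (orth_proj_tr projP) (orth_proj_tr projQ) QP.
Qed.

Lemma orthcS S T : (S <= T)%MS -> (orthc T <= orthc S)%MS.
Proof. by case/submxP=> D ->; apply/sub_kermxP; rewrite trmx_mul mulmxA mulmx_ker mul0mx. Qed.

Lemma orthc_adds U V : (orthc (U + V)%MS :=: orthc U :&: orthc V)%MS.
Proof.
apply/eqmxP/andP; split.
  by rewrite sub_capmx !orthcS ?addsmxSl ?addsmxSr.
apply/sub_kermxP; have /submxP[E ->] : (U + V <= col_mx U V)%MS by rewrite addsmxE.
rewrite trmx_mul tr_col_mx mulmxA mul_mx_row.
have /sub_kermxP -> := capmxSl (orthc U) (orthc V).
by have /sub_kermxP -> := capmxSr (orthc U) (orthc V); rewrite row_mx0 mul0mx.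
Qed.

End OrthogonalProjection.

Section ParallelSum.
Variables (R : realType) (n : nat) (S T A B M : 'M[R]_n).
Hypotheses (projA : is_orth_proj S A) (projB : is_orth_proj T B).
Hypothesis pinvM : is_MP_inverse (A + B) M.

Lemma mulmx_add_orth_proj_eq0 r (X : 'M[R]_(r, n)) :
  X *m (A + B) = 0 -> X *m A = 0 /\ X *m B = 0.
Proof.
move=> XAB0; apply: addmx_mulmx_tr_eq0.
rewrite !trmx_mul (orth_proj_tr projA) (orth_proj_tr projB) !mulmxA.
rewrite -(mulmxA X A) -(mulmxA X B) (orth_proj_idem projA) (orth_proj_idem projB).
by rewrite -mulmxDl -mulmxDr XAB0 mul0mx.
Qed.

Lemma add_orth_proj_pinvK : (A + B) *m M *m A = A /\ (A + B) *m M *m B = B.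
Proof.
have [ABM _ _ _] := pinvM.
have [] := @mulmx_add_orth_proj_eq0 _ (1%:M - (A + B) *m M).
  by rewrite mulmxBl mul1mx ABM subrr.
by rewrite !mulmxBl !mul1mx => /subr0_eq <- /subr0_eq <-.
Qed.

Lemma add_orth_proj_pinvKr : A *m M *m (A + B) = A /\ B *m M *m (A + B) = B.
Proof.
have [ABM _ _ MABsym] := pinvM.
have ABsym : (A + B)^T = A + B.
  by rewrite linearD /= (orth_proj_tr projA) (orth_proj_tr projB).
have [] := @mulmx_add_orth_proj_eq0 _ (1%:M - M *m (A + B)).
  apply: trmx_inj; rewrite trmx_mul ABsym linearB /= trmx1 MABsym.
  by rewrite mulmxBr mulmx1 mulmxA ABM subrr trmx0.
rewrite !mulmxBl !mul1mx => /subr0_eq MA /subr0_eq MB; split.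
- by rewrite -[RHS](orth_proj_tr projA) [in RHS]MA trmx_mul MABsym (orth_proj_tr projA) mulmxA.
- by rewrite -[RHS](orth_proj_tr projB) [in RHS]MB trmx_mul MABsym (orth_proj_tr projB) mulmxA.
Qed.

Lemma parallel_sum_l : B *m M *m A = A - A *m M *m A.
Proof.
by rewrite -[X in X - _](proj1 add_orth_proj_pinvK) -!mulmxBl addrAC subrr add0r.
Qed.

Lemma parallel_sum_r : B *m M *m A = B - B *m M *m B.
Proof.
by rewrite -[X in X - _](proj2 add_orth_proj_pinvKr) -mulmxBr addrK.
Qed.

Lemma parallel_sumC : A *m M *m B = B *m M *m A.
Proof.
by rewrite parallel_sum_l -[X in X - _](proj1 add_orth_proj_pinvKr) -mulmxBr addrAC subrr add0r.
Qed.

Lemma orth_proj_capmx : is_orth_proj (S :&: T)%MS (2%:R *: (B *m M *m A)).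
Proof.
apply/orth_projP; split.
  rewrite sub_capmx; apply/andP; split; apply: scalemx_sub.
  - exact: submx_trans (submxMl _ _) (orth_proj_sub projA).
  - by rewrite -parallel_sumC (submx_trans (submxMl _ _) (orth_proj_sub projB)).
set W := (S :&: T)%MS.
have AW : A *m W^T = W^T.
  by rewrite -(orth_proj_tr projA) -trmx_mul (orth_proj_id projA (capmxSl S T)).
have BW : B *m W^T = W^T.
  by rewrite -(orth_proj_tr projB) -trmx_mul (orth_proj_id projB (capmxSr S T)).
have ABMW : (A + B) *m M *m W^T = W^T.
  by rewrite -{1}AW mulmxA (proj1 add_orth_proj_pinvK) AW.
rewrite scaler_nat mulr2n mulmxDl {1}parallel_sum_l parallel_sum_r.
by rewrite !mulmxBl -!mulmxA AW BW addrACA -opprD -mulmxDl mulmxA ABMW addrK.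
Qed.

End ParallelSum.

Lemma orth_proj_adds_parallel_sum (R : realType) (n : nat) (U V PUV A B M : 'M[R]_n) :
  is_orth_proj (U + V)%MS PUV -> is_orth_proj (orthc U) A -> is_orth_proj (orthc V) B ->
  is_MP_inverse (A + B) M -> PUV = 1%:M - 2%:R *: (B *m M *m A).
Proof.
move=> projUV projA projB pinvM.
have proj2N := orth_proj_eqmx (orth_proj_capmx projA projB pinvM) (eqmx_sym (orthc_adds U V)).
by rewrite -(orth_proj_uniq (orth_proj_orthc projUV) proj2N) opprB addrC subrK.
Qed.

Theorem mainTheorem4 (R : realType) (n : nat) (U V : 'M[R]_n)
  (PU PV PUV PUp PVp M1 M2 : 'M[R]_n) :
  is_orth_proj U PU -> is_orth_proj V PV -> is_orth_proj (U + V)%MS PUV ->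
  is_orth_proj (orthc U) PUp -> is_orth_proj (orthc V) PVp ->
  is_MP_inverse (PUp + PVp) M1 ->
  is_MP_inverse ((2 : R)%:M - PU - PV) M2 ->
  PUV = 1%:M - (2 : R) *: (PVp *m M1 *m PUp) /\
  PUV = 1%:M - (2 : R) *: ((1%:M - PV) *m M2 *m (1%:M - PU)).
Proof.
move=> projU projV projUV projUp projVp pinvM1 pinvM2.
have PUpE : PUp = 1%:M - PU := orth_proj_uniq projUp (orth_proj_orthc projU).
have PVpE : PVp = 1%:M - PV := orth_proj_uniq projVp (orth_proj_orthc projV).
have sumE : (2 : R)%:M - PU - PV = PUp + PVp.
  by rewrite PUpE PVpE addrACA -opprD -raddfD -mulr2n opprD addrA.
rewrite sumE in pinvM2; rewrite -PUpE -PVpE.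
by split; [apply: (orth_proj_adds_parallel_sum projUV projUp projVp pinvM1)
         | apply: (orth_proj_adds_parallel_sum projUV projUp projVp pinvM2)].
Qed.
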